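(* MWL is subsumed by FO(ERDPQ): for every MWL formula there is an FO(ERDPQ) formula expressing the same query (position variables of sort $\pi$ being represented by path variables constrained to be prefixes of $\pi$). In particular WL is subsumed by FO(ERDPQ).
   Context: Data graphs. Fix a finite alphabet $\Sigma$ and infinite data domains $\mathcal D_{\mathrm{id}}$ and $\mathcal D_{\mathrm{prop}}$. A data graph is $G=(V,E,\mathrm{id},\mathrm{dataof})$ with $V$ a finite nonempty set of nodes, $E\subseteq V\times\Sigma\times V$, $\mathrm{id}:V\to\mathcal D_{\mathrm{id}}$ injective and $\mathrm{dataof}:V\to\mathcal D_{\mathrm{prop}}$. A path is a sequence $\rho=v_0a_1v_1\cdots a_nv_n$ ($n\ge 0$) with $(v_{i-1},a_i,v_i)\in E$ for all $i$; its length is $n$, its positions are $0,\dots,n$. Its data path is $d_0a_1d_1\cdots a_nd_n$ with $d_i=(\mathrm{id}(v_i),\mathrm{dataof}(v_i))$. RDPA. An $n$-ary register data path automaton (RDPA) has finitely many states partitioned into word states and data states, an initial data state, a set of final word states, and finitely many registers, each an id-register (values in $\mathcal D_{\mathrm{id}}\cup\{\sharp\}$) or a data-register (values in $\mathcal D_{\mathrm{prop}}\cup\{\sharp\}$), all initially $\sharp$. It reads words alternating between data letters and word letters, starting and ending with a data letter. From a word state it reads a letter of $(\Sigma\cup\{\sharp\})^n$ via a transition $p\xrightarrow{a}q$ to a data state, leaving registers unchanged. From a data state it reads a data letter (an $n$-tuple of ids and an $n$-tuple of property values, each possibly $\sharp$) via a transition whose guard is a conjunction of (well-typed) equalities/disequalities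 between registers, input components and constants, and whose update assigns to some registers an input component, a register value or a constant; it then moves to a word state. It accepts nondeterministically if some run ends in a final state. A tuple $(u_1,\dots,u_n)$ of data paths is accepted if their convolution (position-wise tuple, shorter ones padded with $\sharp$ to the length of the longest) is accepted. FO(ERDPQ). Formulas use node variables (ranging over $V$) and path variables (ranging over paths of $G$). Atoms: $\pi=\omega$; $x=y$; $(x,\pi,y)$ (''$\pi$ is a path from $x$ to $y$''); $(\pi_1,\dots,\pi_n)\in A$ for an $n$-ary RDPA $A$ (''the tuple of data paths of $\pi_1,\dots,\pi_n$ is accepted by $A$''). Formulas are closed under $\neg,\wedge,\exists x,\exists\pi$ with standard semantics. WL (walk logic). Path variables $\pi,\omega,\dots$ range over paths; each position variable $\ell^\pi$ has a sort $\pi$ and ranges over positions of the path assigned to $\pi$. Atoms: $E_a(\ell^\pi,m^\pi)$ ($m=\ell+1$ and the $m$-th label of the path is $a$); $\ell^\pi<m^\pi$ (same sort only); $\ell^\pi\equiv_{\mathrm{id}} n^\omega$ (the nodes at these positions are equal); $\ell^\pi\equiv_{\mathrm{data}} n^\omega$ (these nodes have equal $\mathrm{dataof}$). Closed under $\neg,\vee,\exists\ell^\pi,\exists\pi$. MWL (multi-path walk logic) is WL extended with atoms $\ell^\pi<n^\omega$ for arbitrary (possibly different) sorts $\pi,\omega$, true iff the position assigned to $\ell^\pi$ is smaller, as an integer, than the position assigned to $n^\omega$. *)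

From mathcomp Require Import all_boot.
From Stdlib Require List.
Set Implicit Arguments.
Unset Strict Implicit.
Unset Printing Implicit Defensive.

Record dgraph (Sigma : finType) (Did Dprop : Type) := DGraph {
  gV : finType;
  gV_nonempty : 0 < #|gV|;
  gE : gV -> Sigma -> gV -> bool;
  gid : gV -> Did;
  gid_inj : injective gid;
  gdata : gV -> Dprop
}.
Arguments gE {Sigma Did Dprop} _ _ _ _.
Arguments gid {Sigma Did Dprop} _ _.
Arguments gdata {Sigma Did Dprop} _ _.

(* A path v0 a1 v1 ... an vn, represented by its start node and the list of
   steps (a_i, v_i).  Validity is a separate predicate. *)
Record gpath (Sigma : finType) (Did Dprop : Type) (G : dgraph Sigma Did Dprop) :=
  GPath { pstart : gV G; psteps : seq (Sigma * gV G) }.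
Arguments GPath {Sigma Did Dprop G} _ _.
Arguments pstart {Sigma Did Dprop G} _.
Arguments psteps {Sigma Did Dprop G} _.

Fixpoint valid_steps (Sigma : finType) (Did Dprop : Type)
  (G : dgraph Sigma Did Dprop) (u : gV G) (s : seq (Sigma * gV G)) : bool :=
  match s with
  | [::] => true
  | (a, v) :: s' => gE G u a v && valid_steps v s'
  end.

Definition valid_path (Sigma : finType) (Did Dprop : Type)
  (G : dgraph Sigma Did Dprop) (p : gpath G) : bool :=
  valid_steps (pstart p) (psteps p).

Definition plen (Sigma : finType) (Did Dprop : Type)
  (G : dgraph Sigma Did Dprop) (p : gpath G) : nat := size (psteps p).

(* node v_i at position i (only meaningful for i <= plen p) *)
Definition pnode (Sigma : finType) (Did Dprop : Type)
  (G : dgraph Sigma Did Dprop) (p : gpath G) (i : nat) : gV G :=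
  nth (pstart p) (pstart p :: [seq s.2 | s <- psteps p]) i.

(* label a_i (i >= 1), as an option (None if out of range) *)
Definition plabel (Sigma : finType) (Did Dprop : Type)
  (G : dgraph Sigma Did Dprop) (p : gpath G) (i : nat) : option Sigma :=
  nth None [seq Some s.1 | s <- psteps p] i.-1.

Definition pend (Sigma : finType) (Did Dprop : Type)
  (G : dgraph Sigma Did Dprop) (p : gpath G) : gV G := pnode p (plen p).

Definition pprefix (Sigma : finType) (Did Dprop : Type)
  (G : dgraph Sigma Did Dprop) (p : gpath G) (l : nat) : gpath G :=
  GPath (pstart p) (take l (psteps p)).

(* None plays the role of the padding symbol #.                              *)

Inductive idterm (Did : Type) (n : nat) (RI : Type) :=
  | IReg of RI
  | IIn of 'I_n
  | IConst of option Did.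

Inductive dterm (Dprop : Type) (n : nat) (RD : Type) :=
  | DReg of RD
  | DIn of 'I_n
  | DConst of option Dprop.

Inductive gatom (Did Dprop : Type) (n : nat) (RI RD : Type) :=
  | GIdEq of idterm Did n RI & idterm Did n RI
  | GIdNeq of idterm Did n RI & idterm Did n RI
  | GDEq of dterm Dprop n RD & dterm Dprop n RD
  | GDNeq of dterm Dprop n RD & dterm Dprop n RD.

Definition dletter (Did Dprop : Type) (n : nat) : Type :=
  (n.-tuple (option Did) * n.-tuple (option Dprop))%type.

Definition wletter (Sigma : finType) (n : nat) : Type := n.-tuple (option Sigma).

Record rdpa (Sigma : finType) (Did Dprop : Type) (n : nat) := RDPA {
  rstate : finType;
  risdata : rstate -> bool;           (* data states; the others are word states *)
  rinit : rstate;
  rfinal : rstate -> bool;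
  rRI : finType;
  rRD : finType;
  rwtrans : seq (rstate * wletter Sigma n * rstate);
  (* (source, guard (conjunction of atoms), update of id-registers,
      update of data-registers (None = unchanged), target) *)
  rdtrans : seq (rstate * seq (gatom Did Dprop n rRI rRD)
                 * (rRI -> option (idterm Did n rRI))
                 * (rRD -> option (dterm Dprop n rRD)) * rstate);
  rinit_data : risdata rinit;
  rfinal_word : forall q, rfinal q -> ~~ risdata q;
  rwtrans_ok : forall t, List.In t rwtrans -> ~~ risdata t.1.1 /\ risdata t.2;
  rdtrans_ok : forall t, List.In t rdtrans ->
                 risdata t.1.1.1.1 /\ ~~ risdata t.2
}.

Definition regval (Sigma : finType) (Did Dprop : Type) (n : nat)
  (A : rdpa Sigma Did Dprop n) : Type :=
  ((rRI A -> option Did) * (rRD A -> option Dprop))%type.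

Definition regval0 (Sigma : finType) (Did Dprop : Type) (n : nat)
  (A : rdpa Sigma Did Dprop n) : regval A :=
  (fun _ => None, fun _ => None).

Definition eval_idterm (Sigma : finType) (Did Dprop : Type) (n : nat)
  (A : rdpa Sigma Did Dprop n) (nu : regval A) (d : dletter Did Dprop n)
  (t : idterm Did n (rRI A)) : option Did :=
  match t with
  | IReg r => nu.1 r
  | IIn i => tnth d.1 i
  | IConst c => c
  end.

Definition eval_dterm (Sigma : finType) (Did Dprop : Type) (n : nat)
  (A : rdpa Sigma Did Dprop n) (nu : regval A) (d : dletter Did Dprop n)
  (t : dterm Dprop n (rRD A)) : option Dprop :=
  match t with
  | DReg r => nu.2 r
  | DIn i => tnth d.2 i
  | DConst c => c
  end.

Definition gatom_holds (Sigma : finType) (Did Dprop : Type) (n : nat)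
  (A : rdpa Sigma Did Dprop n) (nu : regval A) (d : dletter Did Dprop n)
  (g : gatom Did Dprop n (rRI A) (rRD A)) : Prop :=
  match g with
  | GIdEq s t => eval_idterm nu d s = eval_idterm nu d t
  | GIdNeq s t => eval_idterm nu d s <> eval_idterm nu d t
  | GDEq s t => eval_dterm nu d s = eval_dterm nu d t
  | GDNeq s t => eval_dterm nu d s <> eval_dterm nu d t
  end.

Definition data_step (Sigma : finType) (Did Dprop : Type) (n : nat)
  (A : rdpa Sigma Did Dprop n) (q : rstate A) (nu : regval A)
  (d : dletter Did Dprop n) (q' : rstate A) (nu' : regval A) : Prop :=
  exists guard ui ud,
    List.In (q, guard, ui, ud, q') (rdtrans A) /\
    (forall g, List.In g guard -> gatom_holds nu d g) /\
    nu' = ((fun r => match ui r with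
                     | Some t => eval_idterm nu d t
                     | None => nu.1 r end),
           (fun r => match ud r with
                     | Some t => eval_dterm nu d t
                     | None => nu.2 r end)).

Fixpoint acc_word (Sigma : finType) (Did Dprop : Type) (n : nat)
  (A : rdpa Sigma Did Dprop n) (q : rstate A) (nu : regval A)
  (rest : seq (wletter Sigma n * dletter Did Dprop n)) : Prop :=
  match rest with
  | [::] => rfinal q
  | (a, d) :: rest' =>
      exists q1 q2 nu2,
        List.In (q, a, q1) (rwtrans A) /\ data_step q1 nu d q2 nu2 /\
        acc_word q2 nu2 rest'
  end.

(* acceptance of the word d0 a1 d1 ... aL dL *)
Definition rdpa_accepts (Sigma : finType) (Did Dprop : Type) (n : nat)
  (A : rdpa Sigma Did Dprop n) (d0 : dletter Did Dprop n)
  (rest : seq (wletter Sigma n * dletter Did Dprop n)) : Prop :=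
  exists q nu, data_step (rinit A) (regval0 A) d0 q nu /\ acc_word q nu rest.

Definition conv_len (Sigma : finType) (Did Dprop : Type) (n : nat)
  (G : dgraph Sigma Did Dprop) (ps : n.-tuple (gpath G)) : nat :=
  \max_(j < n) plen (tnth ps j).

Definition conv_dletter (Sigma : finType) (Did Dprop : Type) (n : nat)
  (G : dgraph Sigma Did Dprop) (ps : n.-tuple (gpath G)) (i : nat)
  : dletter Did Dprop n :=
  ([tuple (if i <= plen (tnth ps j) then Some (gid G (pnode (tnth ps j) i))
           else None) | j < n],
   [tuple (if i <= plen (tnth ps j) then Some (gdata G (pnode (tnth ps j) i))
           else None) | j < n]).

Definition conv_wletter (Sigma : finType) (Did Dprop : Type) (n : nat)
  (G : dgraph Sigma Did Dprop) (ps : n.-tuple (gpath G)) (i : nat)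
  : wletter Sigma n :=
  [tuple (if i <= plen (tnth ps j) then plabel (tnth ps j) i else None) | j < n].

Definition accepts_paths (Sigma : finType) (Did Dprop : Type) (n : nat)
  (G : dgraph Sigma Did Dprop) (A : rdpa Sigma Did Dprop n)
  (ps : n.-tuple (gpath G)) : Prop :=
  rdpa_accepts A (conv_dletter ps 0)
    [seq (conv_wletter ps i, conv_dletter ps i) | i <- iota 1 (conv_len ps)].

(* (inl pi  represents the MWL path variable pi,                             *)
(*  inr x   represents the MWL position variable x, see below)               *)

Definition fo_pvar : eqType := (nat + (nat * nat))%type.

Inductive fo (Sigma : finType) (Did Dprop : Type) :=
  | FPathEq of fo_pvar & fo_pvar
  | FNodeEq of nat & nat
  | FReach of nat & fo_pvar & nat
  | FAut (n : nat) of n.-tuple fo_pvar & rdpa Sigma Did Dprop n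
  | FNeg of fo Sigma Did Dprop
  | FAnd of fo Sigma Did Dprop & fo Sigma Did Dprop
  | FExNode of nat & fo Sigma Did Dprop
  | FExPath of fo_pvar & fo Sigma Did Dprop.

Fixpoint fo_sat (Sigma : finType) (Did Dprop : Type)
  (G : dgraph Sigma Did Dprop) (mun : nat -> gV G) (mup : fo_pvar -> gpath G)
  (f : fo Sigma Did Dprop) : Prop :=
  match f with
  | FPathEq p q => mup p = mup q
  | FNodeEq x y => mun x = mun y
  | FReach x p y => pstart (mup p) = mun x /\ pend (mup p) = mun y
  | FAut n ps A => accepts_paths A [tuple mup (tnth ps j) | j < n]
  | FNeg f1 => ~ fo_sat mun mup f1
  | FAnd f1 f2 => fo_sat mun mup f1 /\ fo_sat mun mup f2
  | FExNode x f1 =>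
      exists v : gV G, fo_sat (fun y => if y == x then v else mun y) mup f1
  | FExPath p f1 =>
      exists w : gpath G, valid_path w /\
        fo_sat mun (fun q => if q == p then w else mup q) f1
  end.

(* path variables: nat;  position variables: pairs (name, sort) : nat * nat, *)
(* the second component being the path variable that is the sort.           *)

Definition posvar : eqType := (nat * nat)%type.

Inductive mwl (Sigma : finType) :=
  | MEdge of nat & Sigma & nat & nat
      (* MEdge pi a l m  :  E_a(l^pi, m^pi) *)
  | MLt of posvar & posvar             (* l^pi < n^omega, arbitrary sorts *)
  | MEqId of posvar & posvar
  | MEqData of posvar & posvar
  | MNeg of mwl Sigma
  | MOr of mwl Sigma & mwl Sigma
  | MExPos of posvar & mwl Sigma
  | MExPath of nat & mwl Sigma.

Fixpoint mwl_sat (Sigma : finType) (Did Dprop : Type)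
  (G : dgraph Sigma Did Dprop) (nup : nat -> gpath G) (nul : posvar -> nat)
  (f : mwl Sigma) : Prop :=
  match f with
  | MEdge pi a l m =>
      nul (m, pi) = (nul (l, pi)).+1 /\ plabel (nup pi) (nul (m, pi)) = Some a
  | MLt x y => nul x < nul y
  | MEqId x y => pnode (nup x.2) (nul x) = pnode (nup y.2) (nul y)
  | MEqData x y =>
      gdata G (pnode (nup x.2) (nul x)) = gdata G (pnode (nup y.2) (nul y))
  | MNeg f1 => ~ mwl_sat nup nul f1
  | MOr f1 f2 => mwl_sat nup nul f1 \/ mwl_sat nup nul f2
  | MExPos x f1 =>
      exists i, i <= plen (nup x.2) /\
        mwl_sat nup (fun y => if y == x then i else nul y) f1
  | MExPath pi f1 =>
      exists w : gpath G, valid_path w /\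
        mwl_sat (fun q => if q == pi then w else nup q) nul f1
  end.

Fixpoint mwl_free_pos (Sigma : finType) (x : posvar) (f : mwl Sigma) : bool :=
  match f with
  | MEdge pi _ l m => (x == (l, pi)) || (x == (m, pi))
  | MLt y z | MEqId y z | MEqData y z => (x == y) || (x == z)
  | MNeg f1 => mwl_free_pos x f1
  | MOr f1 f2 => mwl_free_pos x f1 || mwl_free_pos x f2
  | MExPos y f1 => (x != y) && mwl_free_pos x f1
  | MExPath _ f1 => mwl_free_pos x f1
  end.

(* well-formedness: in  exists pi. psi, no position variable of sort pi is
   free in psi (position variables of sort pi live in the scope of pi). *)
Fixpoint mwl_wf (Sigma : finType) (f : mwl Sigma) : Prop :=
  match f with
  | MEdge _ _ _ _ | MLt _ _ | MEqId _ _ | MEqData _ _ => True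
  | MNeg f1 => mwl_wf f1
  | MOr f1 f2 => mwl_wf f1 /\ mwl_wf f2
  | MExPos _ f1 => mwl_wf f1
  | MExPath pi f1 => mwl_wf f1 /\ (forall x : posvar, x.2 = pi -> ~~ mwl_free_pos x f1)
  end.

Fixpoint is_wl (Sigma : finType) (f : mwl Sigma) : bool :=
  match f with
  | MLt x y => x.2 == y.2
  | MEdge _ _ _ _ | MEqId _ _ | MEqData _ _ => true
  | MNeg f1 | MExPos _ f1 | MExPath _ f1 => is_wl f1
  | MOr f1 f2 => is_wl f1 && is_wl f2
  end.

(* encoding of an MWL assignment into an FO(ERDPQ) path assignment:
   path variable pi  |->  nup pi ;
   position variable x = (l, pi) |-> prefix of nup pi of length nul x *)
Definition encode_assign (Sigma : finType) (Did Dprop : Type)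
  (G : dgraph Sigma Did Dprop) (nup : nat -> gpath G) (nul : posvar -> nat)
  : fo_pvar -> gpath G :=
  fun v => match v with
           | inl pi => nup pi
           | inr x => pprefix (nup x.2) (nul x)
           end.

From mathcomp Require Import all_boot.
From Stdlib Require List.
From Stdlib Require Import Classical.
From mathcomp Require Import zify.
Set Implicit Arguments.
Unset Strict Implicit.
Unset Printing Implicit Defensive.

(* A position l of sort pi is encoded by the prefix of length l of the path pi. Under this
   encoding the MWL atoms become properties of the convolution of two paths that a register-free
   automaton checks letter by letter, looking only at which tracks are already padded: l < m says
   that the first track is padded at the last position, E_a(l, m) that it is padded exactly there
   and the second track reads a, and "w is a position of pi" that w is a prefix of pi. Equality of
   the nodes at two positions is equality of the end nodes of the two prefixes, which reachability
   atoms express, and equality of their data is tested on two paths of length 0 sitting at those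
   end nodes. Connectives and quantifiers are translated homomorphically, a position quantifier
   becoming a path quantifier guarded by the prefix automaton. *)

Lemma InP (T : eqType) (x : T) (s : seq T) : List.In x s <-> x \in s.
Proof.
elim: s => [|y s IHs] //=; rewrite in_cons.
split=> [[->|/IHs ->] | /orP[/eqP ->|/IHs]]; rewrite ?eqxx ?orbT; auto.
Qed.

Lemma tnth_pair0 (T : Type) (x y : T) : tnth [tuple x; y] ord0 = x. Proof. by []. Qed.
Lemma tnth_pair1 (T : Type) (x y : T) : tnth [tuple x; y] ord_max = y. Proof. by []. Qed.

Lemma mktuple2 (T : Type) (F : 'I_2 -> T) : [tuple F j | j < 2] = [tuple F ord0; F ord_max].
Proof.
apply: eq_from_tnth => j; rewrite tnth_mktuple.
by case: j => -[|[|]] // lt_j; congr F; apply: val_inj.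
Qed.

Section PathPrefix.
Variables (Sigma : finType) (Did Dprop : Type) (G : dgraph Sigma Did Dprop).
Implicit Types (p u v : gpath G).

Lemma plen_prefix p l : plen (pprefix p l) = minn l (plen p).
Proof. exact: size_take_min. Qed.

Lemma pnode_prefix p l i : i <= l -> pnode (pprefix p l) i = pnode p i.
Proof. by rewrite /pnode /= map_take; case: i => [|i] //= lt_il; rewrite nth_take. Qed.

Lemma plabel_prefix p l i : 0 < i <= l -> plabel (pprefix p l) i = plabel p i.
Proof. by move=> le_il; rewrite /plabel /= map_take nth_take //; lia. Qed.

Lemma pend_prefix p l : l <= plen p -> pend (pprefix p l) = pnode p l.
Proof. by move=> le_lp; rewrite /pend plen_prefix (minn_idPl le_lp) pnode_prefix. Qed.

Lemma valid_prefix p l : valid_path p -> valid_path (pprefix p l).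
Proof.
rewrite /valid_path; case: p => /= u s.
by elim: s u l => [|[a w] s IHs] u [|l] //= /andP[-> /IHs]; apply.
Qed.

Lemma pstep_nth p k x0 : k < plen p ->
  plabel p k.+1 = Some (nth x0 (psteps p) k).1 /\ pnode p k.+1 = (nth x0 (psteps p) k).2.
Proof. by move=> lt_kp; rewrite /plabel /pnode /= !(nth_map x0). Qed.

Lemma plabel_neq_None p i : 0 < i <= plen p -> plabel p i != None.
Proof.
case: i => // k /andP[_ lt_kp]; rewrite /plabel /=.
have : nth None [seq Some s.1 | s <- psteps p] k \in [seq Some s.1 | s <- psteps p].
  by rewrite mem_nth // size_map.
by case/mapP=> s _ ->.
Qed.

Lemma pprefixP u v : u = pprefix v (plen u) <->
  [/\ plen u <= plen v,
      forall i, i <= plen u -> pnode u i = pnode v i &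
      forall i, 0 < i <= plen u -> plabel u i = plabel v i].
Proof.
split=> [eq_u | [le_uv nodes labels]].
  have := congr1 (@plen _ _ _ G) eq_u; rewrite plen_prefix => len_u.
  split=> [| i le_iu | i le_iu]; first lia.
    by rewrite {1}eq_u pnode_prefix.
  by rewrite {1}eq_u plabel_prefix.
case: u le_uv nodes labels => su stu le_uv nodes labels.
have eq_s : su = pstart v := nodes 0 (leq0n _).
rewrite /pprefix -eq_s; congr GPath.
case: stu le_uv nodes labels => [|x0 s] le_uv nodes labels; first by rewrite /plen take0.
apply: (@eq_from_nth _ x0) => [|k lt_k]; first by rewrite size_takel.
rewrite nth_take //; have lt_kv : k < plen v by rewrite /plen /= in lt_k le_uv *; lia.
have eq_node := nodes k.+1 lt_k; have eq_label := labels k.+1 lt_k.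
have [lu nu] := pstep_nth (p := GPath su (x0 :: s)) x0 lt_k.
have [lv nv] := pstep_nth x0 lt_kv.
move: eq_label eq_node; rewrite lu nu lv nv => -[eq_l] eq_n.
by rewrite [LHS]surjective_pairing [RHS]surjective_pairing eq_l eq_n.
Qed.
End PathPrefix.

Definition guard_sat (Sigma : finType) (Did Dprop : Type) (n : nat) (A : rdpa Sigma Did Dprop n)
    (gs : seq (gatom Did Dprop n (rRI A) (rRD A))) (d : dletter Did Dprop n) :=
  exists2 g, List.In g gs & gatom_holds (regval0 A) d g.
Arguments guard_sat {Sigma Did Dprop n} A gs d.

Section GuardSat.
Variables (Sigma : finType) (Did Dprop : Type) (n : nat) (A : rdpa Sigma Did Dprop n).

Lemma guard_sat_cons g gs d :
  guard_sat A (g :: gs) d <-> gatom_holds (regval0 A) d g \/ guard_sat A gs d.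
Proof.
split=> [[g' [<- | in_g]] | [hold | [g' in_g]]]; [by left | by right; exists g' | |].
  by exists g; first left.
by exists g'; first right.
Qed.

Lemma guard_sat_nil d : ~ guard_sat A [::] d.
Proof. by case. Qed.
End GuardSat.

Section LetterAutomaton.
Variables (Sigma : finType) (Did Dprop : Type) (n : nat).
Variables (midA lastA : seq (gatom Did Dprop n 'I_0 'I_0)) (W : pred (wletter Sigma n)).

Let noI (_ : 'I_0) : option (idterm Did n 'I_0) := None.
Let noD (_ : 'I_0) : option (dterm Dprop n 'I_0) := None.

(* [None] is the only data state and [Some true] the only final state; reading a data letter,
   the automaton guesses whether it is the last one. *)
Let wtrans : seq (option bool * wletter Sigma n * option bool) :=
  [seq (Some false, w, None) | w <- enum W].
Let dtrans : seq (option bool * seq (gatom Did Dprop n 'I_0 'I_0) * _ * _ * option bool) :=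
  [seq (None, [:: g], noI, noD, Some false) | g <- midA] ++
  [seq (None, [:: g], noI, noD, Some true) | g <- lastA].

Lemma letter_aut_final_ok (q : option bool) : q == Some true -> q != None.
Proof. by move/eqP ->. Qed.

Lemma letter_aut_wtrans_ok t : List.In t wtrans -> t.1.1 != None /\ t.2 == None.
Proof. by case/List.in_map_iff => w [<- _]. Qed.

Lemma letter_aut_dtrans_ok t : List.In t dtrans -> t.1.1.1.1 == None /\ t.2 != None.
Proof. by rewrite List.in_app_iff !List.in_map_iff => -[] [g [<- _]]. Qed.

Definition letter_aut : rdpa Sigma Did Dprop n :=
  @RDPA Sigma Did Dprop n (option bool) (fun q => q == None) None (fun q => q == Some true)
    'I_0 'I_0 wtrans dtrans isT letter_aut_final_ok letter_aut_wtrans_ok letter_aut_dtrans_ok.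

Lemma gatom_holds_regfree (nu : regval letter_aut) d g :
  gatom_holds nu d g <-> gatom_holds (regval0 letter_aut) d g.
Proof.
have eqI t : eval_idterm nu d t = eval_idterm (regval0 letter_aut) d t by case: t => // -[].
have eqD t : eval_dterm nu d t = eval_dterm (regval0 letter_aut) d t by case: t => // -[].
by case: g => s t /=; rewrite ?eqI ?eqD.
Qed.

Lemma letter_aut_data_stepP q nu d q' nu' :
  data_step (A := letter_aut) q nu d q' nu' <->
  [/\ q = None, nu' = nu &
      q' = Some false /\ guard_sat letter_aut midA d \/
      q' = Some true /\ guard_sat letter_aut lastA d].
Proof.
split.
- case=> guard [ui [ud [+ [holds ->]]]]; rewrite List.in_app_iff !List.in_map_iff.
  case=> -[g [[<- eq_guard <- <- <-] in_g]]; subst guard;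
    have /gatom_holds_regfree hold := holds g (or_introl erefl);
    (split=> //; first by rewrite [RHS]surjective_pairing); [left | right]; by split=> //; exists g.
- case=> -> -> [] [-> [g in_g hold]]; exists [:: g], noI, noD;
    (split; first by rewrite /= List.in_app_iff !List.in_map_iff; (left + right); exists g);
    (split; last by rewrite [LHS]surjective_pairing);
    by move=> _ [<-|[]]; apply/gatom_holds_regfree.
Qed.

Lemma letter_aut_word_stepP q w q' :
  List.In (q, w, q') (rwtrans letter_aut) <-> [/\ q = Some false, q' = None & W w].
Proof.
rewrite List.in_map_iff; split=> [[w' [[-> <- ->] /InP]] | [-> -> Ww]].
  by rewrite mem_enum.
by exists w; split=> //; apply/InP; rewrite mem_enum.
Qed.

Lemma letter_aut_runP nu (w : nat -> wletter Sigma n) (d : nat -> dletter Did Dprop n) k m :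
  (exists q nu', data_step (A := letter_aut) None nu (d k) q nu' /\
                 acc_word q nu' [seq (w i, d i) | i <- iota k.+1 m]) <->
  [/\ forall i, k <= i < k + m -> guard_sat letter_aut midA (d i),
      guard_sat letter_aut lastA (d (k + m)) &
      forall i, k < i <= k + m -> W (w i)].
Proof.
elim: m k nu => [|m IHm] k nu /=.
  rewrite addn0; split=> [[q [nu' [/letter_aut_data_stepP[_ _ step] fin]]] | [_ last _]].
    case: step fin => -[-> sat_q] // _; split=> // i; lia.
  by exists (Some true), nu; split=> //; apply/letter_aut_data_stepP; split=> //; right.
split.
- case=> q [nu' [/letter_aut_data_stepP[_ _ step] [q1 [q2 [nu2 [+ [step2 acc]]]]]]].
  case/letter_aut_word_stepP=> eq_q eq_q1 Ww; subst q q1.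
  case: step => -[] // _ mid_k.
  have [mids last Ws] := proj1 (IHm k.+1 nu') (ex_intro _ q2 (ex_intro _ nu2 (conj step2 acc))).
  split=> [i /andP[le_ki lt_i] | | i /andP[lt_ki le_i]].
  + by case: (ltngtP k i) le_ki => // [lt_ki | <-] _; [apply: mids; lia|].
  + by rewrite addnS.
  + by case: (ltngtP k.+1 i) lt_ki => // [lt_k1i | <-] _; [apply: Ws; lia|].
- case=> mids last Ws.
  have [q2 [nu2 [step2 acc]]] : exists q nu', data_step (A := letter_aut) None nu (d k.+1) q nu' /\
      acc_word q nu' [seq (w i, d i) | i <- iota k.+2 m].
    by apply/IHm; split=> [i ? | | i ?]; [apply: mids; lia | rewrite addSnnS | apply: Ws; lia].
  exists (Some false), nu; split; first by apply/letter_aut_data_stepP; split=> //; left;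
    split=> //; apply: mids; lia.
  exists None, q2, nu2; split; first by apply/letter_aut_word_stepP; split=> //; apply: Ws; lia.
  by split.
Qed.

Lemma accepts_letter_autP (G : dgraph Sigma Did Dprop) (ps : n.-tuple (gpath G)) :
  accepts_paths letter_aut ps <->
  [/\ forall i, i < conv_len ps -> guard_sat letter_aut midA (conv_dletter ps i),
      guard_sat letter_aut lastA (conv_dletter ps (conv_len ps)) &
      forall i, 0 < i <= conv_len ps -> W (conv_wletter ps i)].
Proof. exact: (letter_aut_runP (regval0 letter_aut) _ _ 0 (conv_len ps)). Qed.
End LetterAutomaton.

Section TwoPathAutomata.
Variables (Sigma : finType) (Did Dprop : Type).

Notation atom := (gatom Did Dprop 2 'I_0 'I_0).
Notation input j := (@IIn Did 2 'I_0 j).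
Notation pad := (@IConst Did 2 'I_0 None).

Definition padded (j : 'I_2) : atom := @GIdEq Did Dprop 2 'I_0 'I_0 (input j) pad.
Definition present (j : 'I_2) : atom := @GIdNeq Did Dprop 2 'I_0 'I_0 (input j) pad.
Definition same_id : atom := @GIdEq Did Dprop 2 'I_0 'I_0 (input ord0) (input ord_max).
Definition same_data : atom :=
  @GDEq Did Dprop 2 'I_0 'I_0 (@DIn Dprop 2 'I_0 ord0) (@DIn Dprop 2 'I_0 ord_max).
Definition always : atom := @GIdEq Did Dprop 2 'I_0 'I_0 pad pad.

Definition lt_aut := letter_aut [:: always] [:: padded ord0] (@predT (wletter Sigma 2)).

(* The first track is padded only at the last position, where the second track must read [a]. *)
Definition edge_aut (a : Sigma) :=
  letter_aut [:: present ord0] [:: padded ord0]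
    (fun w : wletter Sigma 2 => (tnth w ord0 != None) || (tnth w ord_max == Some a)).

Definition eq_data_aut := letter_aut [::] [:: same_data] (@predT (wletter Sigma 2)).

Definition prefix_aut :=
  letter_aut [:: same_id; padded ord0] [:: same_id; padded ord0]
    (fun w : wletter Sigma 2 => (tnth w ord0 == tnth w ord_max) || (tnth w ord0 == None)).

Variable G : dgraph Sigma Did Dprop.
Implicit Types (u v : gpath G).

Lemma conv_len2 u v : conv_len [tuple u; v] = maxn (plen u) (plen v).
Proof. by rewrite /conv_len !big_ord_recr big_ord0 /= max0n. Qed.

Lemma lt_autP u v : accepts_paths lt_aut [tuple u; v] <-> plen u < plen v.
Proof.
rewrite accepts_letter_autP conv_len2; split.
  case=> _ /guard_sat_cons[|[]//]; rewrite /= tnth_mktuple tnth_pair0; case: ifP => // /negbT; lia.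
move=> lt_uv; split=> // [i _ | ]; first by apply/guard_sat_cons; left.
by apply/guard_sat_cons; left; rewrite /= tnth_mktuple tnth_pair0; case: ifP => //; lia.
Qed.

Lemma edge_autP a u v :
  accepts_paths (edge_aut a) [tuple u; v] <-> plen v = (plen u).+1 /\ plabel v (plen v) = Some a.
Proof.
rewrite accepts_letter_autP conv_len2; set L := maxn _ _; split.
- case=> mids /guard_sat_cons[|[]//] + Ws; rewrite /= tnth_mktuple tnth_pair0.
  case: ifP => // /negbT; rewrite -ltnNge => lt_uL _.
  have /guard_sat_cons[|[]//] := mids L.-1 ltac:(lia).
  rewrite /= tnth_mktuple tnth_pair0; case: ifP => // le_Lu _.
  have eq_len : plen v = (plen u).+1 by lia.
  have eq_L : L = plen v by lia.
  split=> //; move: (Ws L ltac:(lia)).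
  by rewrite /= !tnth_mktuple tnth_pair0 tnth_pair1 eq_L leqnn eq_len ltnn => /eqP.
- case=> eq_len label; have -> : L = plen v by rewrite /L eq_len; lia.
  split=> [i lt_iv | | [//|k] /andP[_ le_kv]].
  + by apply/guard_sat_cons; left; rewrite /= tnth_mktuple tnth_pair0; case: ifP => //; lia.
  + by apply/guard_sat_cons; left; rewrite /= tnth_mktuple tnth_pair0; case: ifP => //; lia.
  rewrite /= !tnth_mktuple tnth_pair0 tnth_pair1 le_kv; case: ifP => [le_ku | /negbT lt_uk].
    by rewrite plabel_neq_None.
  have -> : k.+1 = plen v by rewrite -ltnNge in lt_uk; lia.
  by rewrite label /= eqxx.
Qed.

Lemma eq_data_autP u v :
  accepts_paths eq_data_aut [tuple u; v] <->
  [/\ plen u = 0, plen v = 0 & gdata G (pstart u) = gdata G (pstart v)].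
Proof.
rewrite accepts_letter_autP conv_len2; split.
- case=> mids /guard_sat_cons[|[]//] + _.
  have len0 : maxn (plen u) (plen v) = 0.
    by apply/eqP; rewrite -leqn0 leqNgt; apply/negP => /mids[].
  by rewrite len0 /= !tnth_mktuple tnth_pair0 tnth_pair1 /= => -[]; split=> //; lia.
- case=> len_u len_v eq_data; rewrite len_u len_v; split=> [i | | i]; try lia.
  by apply/guard_sat_cons; left; rewrite /= !tnth_mktuple tnth_pair0 tnth_pair1 /= eq_data.
Qed.

Lemma prefix_guardP u v i :
  guard_sat prefix_aut [:: same_id; padded ord0] (conv_dletter [tuple u; v] i) <->
  (i <= plen u -> i <= plen v /\ pnode u i = pnode v i).
Proof.
rewrite !guard_sat_cons /= !tnth_mktuple tnth_pair0 tnth_pair1.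
case: ifP => [le_iu | _]; last by split=> // _; right; left.
case: ifP => [le_iv | _]; last by split=> [[|[|/guard_sat_nil]] | []].
by split=> [[[/(@gid_inj _ _ _ G) ->] | [// | /guard_sat_nil []]] | /(_ isT)[_ ->]] //; left.
Qed.

Lemma prefix_autP u v : accepts_paths prefix_aut [tuple u; v] <-> u = pprefix v (plen u).
Proof.
rewrite accepts_letter_autP conv_len2 pprefixP; split.
- case=> mids last labels.
  have nodes i : i <= maxn (plen u) (plen v) -> i <= plen u -> i <= plen v /\ pnode u i = pnode v i.
    by rewrite leq_eqVlt => /orP[/eqP -> | /mids/prefix_guardP //]; apply/prefix_guardP.
  have le_uv : plen u <= plen v by have [] := nodes (plen u) ltac:(lia) (leqnn _).
  split=> // [i le_iu | i /andP[lt_0i le_iu]]; first by have [] := nodes i ltac:(lia) le_iu.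
  move: (labels i ltac:(lia)); rewrite /= !tnth_mktuple tnth_pair0 tnth_pair1 le_iu.
  rewrite (leq_trans le_iu le_uv) (negbTE (plabel_neq_None _)) ?orbF; last lia.
  by move/eqP.
- case=> le_uv nodes labels; split=> [i _ | | i /andP[lt_0i _]].
  + by apply/prefix_guardP => le_iu; split; [lia | apply: nodes].
  + by apply/prefix_guardP => le_iu; split; [lia | apply: nodes].
  rewrite /= !tnth_mktuple tnth_pair0 tnth_pair1.
  case: ifP => [le_iu | _]; last by rewrite orbT.
  by rewrite (leq_trans le_iu le_uv) labels ?eqxx //; lia.
Qed.
End TwoPathAutomata.

Section Translation.
Variables (Sigma : finType) (Did Dprop : Type).

Lemma fo_pvarE :
  (forall a b : nat, (inl a == inl b :> fo_pvar) = (a == b)) *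
  (forall x y : posvar, (inr x == inr y :> fo_pvar) = (x == y)) *
  (forall a x, (inl a == inr x :> fo_pvar) = false) *
  (forall x a, (inr x == inl a :> fo_pvar) = false).
Proof. by []. Qed.

Local Notation reach x X y := (@FReach Sigma Did Dprop x X y).

Definition fo_or (f g : fo Sigma Did Dprop) := FNeg (FAnd (FNeg f) (FNeg g)).

Definition same_end (X Y : fo_pvar) : fo Sigma Did Dprop :=
  FExNode 0 (FExNode 1 (FExNode 2 (FAnd (reach 0 X 2) (reach 1 Y 2)))).

Definition same_end_data (X Y : fo_pvar) : fo Sigma Did Dprop :=
  FExNode 0 (FExNode 1 (FExNode 2 (FExNode 3
    (FAnd (FAnd (reach 0 X 1) (reach 2 Y 3))
      (FExPath (inl 0) (FExPath (inl 1)
        (FAnd (FAnd (reach 1 (inl 0) 1) (reach 3 (inl 1) 3))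
          (FAut [tuple (inl 0 : fo_pvar); inl 1] (eq_data_aut Sigma Did Dprop))))))))).

Fixpoint mwl_to_fo (f : mwl Sigma) : fo Sigma Did Dprop :=
  match f with
  | MEdge pi a l m => FAut [tuple (inr (l, pi) : fo_pvar); inr (m, pi)] (edge_aut Did Dprop a)
  | MLt x y => FAut [tuple (inr x : fo_pvar); inr y] (lt_aut Sigma Did Dprop)
  | MEqId x y => same_end (inr x) (inr y)
  | MEqData x y => same_end_data (inr x) (inr y)
  | MNeg f1 => FNeg (mwl_to_fo f1)
  | MOr f1 f2 => fo_or (mwl_to_fo f1) (mwl_to_fo f2)
  | MExPos x f1 =>
      FExPath (inr x) (FAnd (FAut [tuple (inr x : fo_pvar); inl x.2] (prefix_aut Sigma Did Dprop))
                            (mwl_to_fo f1))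
  | MExPath pi f1 => FExPath (inl pi) (mwl_to_fo f1)
  end.

Variable G : dgraph Sigma Did Dprop.
Implicit Types (mun : nat -> gV G) (mup : fo_pvar -> gpath G).

Lemma sat_FAut2 mun mup (X Y : fo_pvar) (A : rdpa Sigma Did Dprop 2) :
  fo_sat mun mup (FAut [tuple X; Y] A) <-> accepts_paths A [tuple mup X; mup Y].
Proof. by rewrite /= mktuple2 tnth_pair0 tnth_pair1. Qed.

Lemma sat_same_end mun mup X Y : fo_sat mun mup (same_end X Y) <-> pend (mup X) = pend (mup Y).
Proof.
split=> [[a [b [c [[_ ->] [_ ->]]]]] // | eq_end].
by exists (pstart (mup X)), (pstart (mup Y)), (pend (mup Y)).
Qed.

Lemma sat_same_end_data mun mup X Y :
  fo_sat mun mup (same_end_data X Y) <-> gdata G (pend (mup X)) = gdata G (pend (mup Y)).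
Proof.
split=> [[a [b [c [d [[[_ ->] [_ ->]] [w0 [_ [w1 [_ [[[/= s0 _] [/= s1 _]]]]]]]]]]]] | eq_data].
  by rewrite mktuple2 !tnth_pair0 !tnth_pair1 eq_data_autP /= s0 s1 => -[].
exists (pstart (mup X)), (pend (mup X)), (pstart (mup Y)), (pend (mup Y)).
split=> //; exists (GPath (pend (mup X)) [::]); split=> //; exists (GPath (pend (mup Y)) [::]).
by split=> //; split=> //; apply/sat_FAut2/eq_data_autP.
Qed.

(* Only free position variables are constrained: under [MExPath pi], the bound-out positions of
   sort [pi] may exceed the new path. *)
Definition represents (nup : nat -> gpath G) (nul : posvar -> nat) mup (f : mwl Sigma) :=
  [/\ forall pi, valid_path (nup pi),
      forall pi, mup (inl pi) = nup pi &
      forall x, mwl_free_pos x f ->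
        nul x <= plen (nup x.2) /\ mup (inr x) = pprefix (nup x.2) (nul x)].

Lemma represents_sub nup nul mup (f f1 : mwl Sigma) :
  (forall x, mwl_free_pos x f1 -> mwl_free_pos x f) ->
  represents nup nul mup f -> represents nup nul mup f1.
Proof. by move=> sub [valid paths positions]; split=> // x /sub /positions. Qed.

Lemma represents_pos nup nul mup x f1 i :
  represents nup nul mup (MExPos x f1) -> i <= plen (nup x.2) ->
  represents nup (fun y => if y == x then i else nul y)
    (fun q => if q == inr x then pprefix (nup x.2) i else mup q) f1.
Proof.
case=> valid paths positions le_i; split=> // y free_y; rewrite !fo_pvarE.
by case: (eqVneq y x) => [-> // | ne_yx]; apply: positions; rewrite /= ne_yx.
Qed.

Lemma represents_path nup nul mup pi f1 w :
  mwl_wf (MExPath pi f1) -> represents nup nul mup (MExPath pi f1) -> valid_path w ->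
  represents (fun q => if q == pi then w else nup q) nul
    (fun q => if q == inl pi then w else mup q) f1.
Proof.
case=> _ fresh [valid paths positions] valid_w.
split=> [q | q | y free_y]; rewrite /= ?fo_pvarE; try by case: eqP.
have ne_pi : y.2 != pi by apply/eqP => /fresh; rewrite free_y.
by rewrite (negbTE ne_pi); apply: positions.
Qed.

Theorem mwl_to_fo_correct (f : mwl Sigma) : mwl_wf f ->
  forall nup nul mup mun, represents nup nul mup f ->
  (mwl_sat nup nul f <-> fo_sat mun mup (mwl_to_fo f)).
Proof.
elim: f => [pi a l m | x y | x y | x y | f1 IH | f1 IH1 f2 IH2 | x f1 IH | pi f1 IH]
  wf_f nup nul mup mun rep; try case: (rep) => valid paths positions.
- rewrite [mwl_to_fo _]/= sat_FAut2.
  have /positions[le_l ->] : mwl_free_pos (l, pi) (MEdge pi a l m) by rewrite /= eqxx.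
  have /positions[le_m ->] : mwl_free_pos (m, pi) (MEdge pi a l m) by rewrite /= eqxx orbT.
  rewrite edge_autP !plen_prefix /= !(minn_idPl _) //.
  by split=> -[eq_m label]; (split=> //; move: label); rewrite plabel_prefix // eq_m leqnn.
- rewrite [mwl_to_fo _]/= sat_FAut2 lt_autP.
  have /positions[le_x ->] : mwl_free_pos x (MLt Sigma x y) by rewrite /= eqxx.
  have /positions[le_y ->] : mwl_free_pos y (MLt Sigma x y) by rewrite /= eqxx orbT.
  by rewrite !plen_prefix !(minn_idPl _).
- rewrite [mwl_to_fo _]/= sat_same_end.
  have /positions[le_x ->] : mwl_free_pos x (MEqId Sigma x y) by rewrite /= eqxx.
  have /positions[le_y ->] : mwl_free_pos y (MEqId Sigma x y) by rewrite /= eqxx orbT.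
  by rewrite !pend_prefix.
- rewrite [mwl_to_fo _]/= sat_same_end_data.
  have /positions[le_x ->] : mwl_free_pos x (MEqData Sigma x y) by rewrite /= eqxx.
  have /positions[le_y ->] : mwl_free_pos y (MEqData Sigma x y) by rewrite /= eqxx orbT.
  by rewrite !pend_prefix.
- by rewrite /= (IH wf_f nup nul mup mun rep).
- case: wf_f => wf1 wf2.
  rewrite /= (IH1 wf1 nup nul mup mun); last by apply: represents_sub rep => z /= ->.
  rewrite (IH2 wf2 nup nul mup mun); last by apply: represents_sub rep => z /= ->; rewrite orbT.
  by split; [tauto | case: (classic (fo_sat mun mup (mwl_to_fo f1))); tauto].
- rewrite /=; split=> [[i [le_i sat1]] | [w [valid_w [+ sat1]]]].
    exists (pprefix (nup x.2) i); split; first exact: valid_prefix.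
    split; last exact/(IH wf_f _ _ _ mun (represents_pos rep le_i)).
    rewrite mktuple2 tnth_pair0 tnth_pair1 !fo_pvarE eqxx paths.
    by apply/prefix_autP; rewrite plen_prefix (minn_idPl le_i).
  rewrite mktuple2 tnth_pair0 tnth_pair1 !fo_pvarE eqxx paths => /prefix_autP eq_w.
  have /pprefixP[le_w _ _] := eq_w.
  exists (plen w); split=> //; apply/(IH wf_f _ _ _ mun (represents_pos rep le_w)).
  by rewrite -eq_w.
- have [wf1 _] := wf_f.
  by split=> -[w [valid_w sat1]]; exists w; split=> //;
    apply/(IH wf1 _ _ _ mun (represents_path wf_f rep valid_w)).
Qed.
End Translation.

Theorem mainTheorem16 (Sigma : finType) (Did Dprop : Type)
  (Did_infinite : forall s : list Did, exists d, ~ List.In d s)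
  (Dprop_infinite : forall s : list Dprop, exists d, ~ List.In d s)
  (phi : mwl Sigma) (phi_wf : mwl_wf phi) :
  exists psi : fo Sigma Did Dprop,
    forall (G : dgraph Sigma Did Dprop)
           (nup : nat -> gpath G) (nul : posvar -> nat),
      (forall pi, valid_path (nup pi)) ->
      (forall x : posvar, nul x <= plen (nup x.2)) ->
      forall mun : nat -> gV G,
        (mwl_sat nup nul phi <-> fo_sat mun (encode_assign nup nul) psi).
Proof.
exists (mwl_to_fo Did Dprop phi) => G nup nul valid bounds mun.
by apply: mwl_to_fo_correct => //; split=> // x _; split.
Qed.
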